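(* Let $\triangle_{\delta,\varepsilon}$ be a sparse coloured triangle and let $\gamma$ be an integer. Suppose two distinct black dots $(\alpha,\gamma')$ and $(\beta,\delta')$ of $\triangle_{\delta,\varepsilon}$ both lie on or above the line $l_\gamma$, i.e. $\alpha\le\gamma\le\gamma'$ and $\beta\le\gamma\le\delta'$. Then either both dots lie on $l_\gamma$ (i.e. each has $\gamma$ as one of its coordinates), or they are comparable in the partial order $\preceq$.
   Context: Dots are pairs of integers $(\alpha,\beta)$. For integers $\delta<\varepsilon$, the triangle $\triangle_{\delta,\varepsilon}$ is the set of dots $(\alpha,\beta)$ with $\delta\le\alpha$, $\beta\le\varepsilon$ and $\beta-\alpha\ge 2$; its vertex is $(\delta,\varepsilon)$ and its height is $\varepsilon-\delta-1$. For a dot $(\alpha,\beta)\in\triangle_{\delta,\varepsilon}$, the sub-triangle $\triangle_{\alpha,\beta}$ is defined by the same rule (it is contained in $\triangle_{\delta,\varepsilon}$). A coloured triangle is a triangle in which each dot is coloured black or white. A coloured triangle $\triangle_{\delta,\varepsilon}$ is sparse if for every dot $(\alpha,\beta)\in\triangle_{\delta,\varepsilon}$ (including the vertex) the number of black dots in $\triangle_{\alpha,\beta}$ is at most $\beta-\alpha-1$, with equality if and only if $(\alpha,\beta)$ is black. The line $l_\gamma$ is the set of dots having $\gamma$ as one of their coordinates; a dot $(\alpha,\beta)$ lies on or above $l_\gamma$ if $\alpha\le\gamma\le\beta$. The partial order is $(\alpha,\gamma)\preceq(\beta,\delta)$ iff $\alpha\ge\beta$ and $\gamma\le\delta$. 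*)

From Stdlib Require Import ZArith List Lia.
Import ListNotations.
Open Scope Z_scope.

Definition dot := (Z * Z)%type.

(* A colouring: true = black, false = white. Only its values on dots of the
   triangle under consideration matter. *)
Definition colouring := dot -> bool.

Definition in_tri (d e : Z) (p : dot) : Prop :=
  d <= fst p /\ snd p <= e /\ snd p - fst p >= 2.

Definition in_trib (d e : Z) (p : dot) : bool :=
  (d <=? fst p) && (snd p <=? e) && (2 <=? snd p - fst p).

Definition zrange (d e : Z) : list Z :=
  map (fun k => d + Z.of_nat k) (seq 0 (Z.to_nat (e - d + 1))).

Definition tri_dots (d e : Z) : list dot :=
  filter (in_trib d e) (list_prod (zrange d e) (zrange d e)).

Definition black_count (c : colouring) (a b : Z) : Z :=
  Z.of_nat (length (filter c (tri_dots a b))).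

Definition sparse (c : colouring) (d e : Z) : Prop :=
  forall a b, in_tri d e (a, b) ->
    black_count c a b <= b - a - 1 /\
    (black_count c a b = b - a - 1 <-> c (a, b) = true).

Definition on_line (g : Z) (p : dot) : Prop := fst p = g \/ snd p = g.

Definition preceq (p q : dot) : Prop := fst p >= fst q /\ snd p <= snd q.

(* The theorem follows from a "no crossing" property of sparse triangles:
   two black dots (a,g') and (b,d') with a < b < g' < d' cannot coexist.
   Indeed the sub-triangles with vertices (a,g') and (b,d') both lie in the
   one with vertex (a,d'), they overlap exactly in the one with vertex
   (b,g'), and none of them contains the dot (a,d').  Counting black dots
   (inclusion-exclusion) gives
     #(a,g') + #(b,d') + [(a,d') black] <= #(a,d') + #(b,g').
   For black vertices sparseness gives #(a,g') = g'-a-1, #(b,d') = d'-b-1,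
   and #(b,g') <= g'-b-1, hence #(a,d') >= d'-a-1 + [(a,d') black], which
   contradicts sparseness at (a,d') whether (a,d') is black or white. *)

From Stdlib Require Import ZArith List Lia Permutation.
Import ListNotations.
Open Scope Z_scope.

Lemma zrange_In (x y k : Z) : In k (zrange x y) <-> x <= k <= y.
Proof.
  unfold zrange; rewrite in_map_iff; split.
  - intros [n [<- Hn]]; apply in_seq in Hn; lia.
  - intros Hk; exists (Z.to_nat (k - x)); split; [lia|]; apply in_seq; lia.
Qed.

Lemma zrange_NoDup (x y : Z) : NoDup (zrange x y).
Proof.
  unfold zrange; apply FinFun.Injective_map_NoDup; [intros m n E; lia|].
  apply seq_NoDup.
Qed.

Lemma list_prod_NoDup {A B : Type} (l : list A) (l' : list B) :
  NoDup l -> NoDup l' -> NoDup (list_prod l l').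
Proof.
  induction 1 as [|x l Hx _ IH]; intros Hl'; simpl; [constructor|].
  apply NoDup_app.
  - apply FinFun.Injective_map_NoDup; [intros u v E; now inversion E|exact Hl'].
  - now apply IH.
  - intros [u v] Hmap Hprod; apply in_map_iff in Hmap.
    destruct Hmap as [w [E _]]; inversion E; subst.
    apply in_prod_iff in Hprod; tauto.
Qed.

Lemma in_trib_spec (x y : Z) (p : dot) : in_trib x y p = true <-> in_tri x y p.
Proof. unfold in_trib, in_tri; rewrite !Bool.andb_true_iff, !Z.leb_le; lia. Qed.

Lemma tri_dots_In (x y : Z) (p : dot) : In p (tri_dots x y) <-> in_tri x y p.
Proof.
  destruct p as [u v]; unfold tri_dots.
  rewrite filter_In, (in_prod_iff (zrange x y) (zrange x y) u v), !zrange_In,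
    in_trib_spec.
  unfold in_tri; simpl; lia.
Qed.

Lemma tri_dots_NoDup (x y : Z) : NoDup (tri_dots x y).
Proof. apply NoDup_filter, list_prod_NoDup; apply zrange_NoDup. Qed.

Definition wsum (w : dot -> Z) (L : list dot) : Z :=
  fold_right (fun p s => w p + s) 0 L.

Definition b2z (b : bool) : Z := if b then 1 else 0.

Lemma wsum_add (w1 w2 : dot -> Z) (L : list dot) :
  wsum (fun p => w1 p + w2 p) L = wsum w1 L + wsum w2 L.
Proof. induction L as [|p L IH]; simpl; lia. Qed.

Lemma wsum_le (w1 w2 : dot -> Z) (L : list dot) :
  (forall p, In p L -> w1 p <= w2 p) -> wsum w1 L <= wsum w2 L.
Proof.
  induction L as [|p L IH]; intros Hle; simpl; [lia|].
  assert (Hhead := Hle p (or_introl eq_refl)).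
  assert (wsum w1 L <= wsum w2 L) by (apply IH; intros q Hq; apply Hle; now right).
  lia.
Qed.

Lemma wsum_single (w : dot -> Z) (q : dot) (L : list dot) :
  NoDup L -> In q L -> (forall p, p <> q -> w p = 0) -> wsum w L = w q.
Proof.
  intros Hnd Hq Hw; induction Hnd as [|p L Hp _ IH]; [destruct Hq|]; simpl.
  destruct Hq as [<- | Hq].
  - enough (wsum w L = 0) by lia.
    clear IH; induction L as [|r L IHL]; simpl; [reflexivity|].
    rewrite Hw by (intros E; subst; apply Hp; now left).
    rewrite IHL; [reflexivity|intros Hin; apply Hp; now right].
  - rewrite (Hw p), IH; try lia; [assumption|].
    intros E; subst; contradiction.
Qed.

Lemma length_filter_wsum (f : dot -> bool) (L : list dot) :
  Z.of_nat (length (filter f L)) = wsum (fun p => b2z (f p)) L.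
Proof.
  unfold wsum; induction L as [|p L IH]; simpl; [reflexivity|].
  destruct (f p); simpl length; [change (b2z true) with 1 | change (b2z false) with 0];
    lia.
Qed.

Lemma black_count_within (c : colouring) (x y a b : Z) :
  (forall p, in_tri x y p -> in_tri a b p) ->
  black_count c x y = wsum (fun p => b2z (c p && in_trib x y p)) (tri_dots a b).
Proof.
  intros Hsub; unfold black_count; rewrite <- length_filter_wsum; f_equal.
  apply Permutation_length, NoDup_Permutation; try apply NoDup_filter, tri_dots_NoDup.
  intros p; rewrite !filter_In, Bool.andb_true_iff, in_trib_spec, !tri_dots_In.
  firstorder.
Qed.

Lemma black_count_flat (c : colouring) (x y : Z) :
  y - x < 2 -> black_count c x y = 0.
Proof.
  intros Hflat; unfold black_count.
  destruct (filter c (tri_dots x y)) as [|p l] eqn:E; [reflexivity|exfalso].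
  assert (Hp : In p (filter c (tri_dots x y))) by (rewrite E; now left).
  apply filter_In in Hp; destruct Hp as [Hp _]; apply tri_dots_In in Hp.
  unfold in_tri in Hp; lia.
Qed.

Lemma sparse_black_count_le (c : colouring) (d e x y : Z) :
  sparse c d e -> d <= x -> x < y -> y <= e -> black_count c x y <= y - x - 1.
Proof.
  intros Hs Hdx Hxy Hye.
  destruct (Z_lt_le_dec (y - x) 2) as [Hflat|Htall].
  - rewrite black_count_flat by exact Hflat; lia.
  - apply (Hs x y); unfold in_tri; simpl; lia.
Qed.

Definition dot_eq_dec (p q : dot) : {p = q} + {p <> q}.
Proof. decide equality; apply Z.eq_dec. Defined.

(* Inclusion-exclusion for two crossing sub-triangles (a,g') and (b,d') of the
   triangle with vertex (a,d'); that vertex belongs to neither of them. *)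
Lemma crossing_count (c : colouring) (a b g' d' : Z) :
  a < b -> b < g' -> g' < d' ->
  black_count c a g' + black_count c b d' + b2z (c (a, d')) <=
  black_count c a d' + black_count c b g'.
Proof.
  intros Hab Hbg Hgd.
  set (U := tri_dots a d').
  set (vertex := fun p => if dot_eq_dec p (a, d') then b2z (c p) else 0).
  assert (Hvertex : wsum vertex U = b2z (c (a, d'))).
  { rewrite (wsum_single vertex (a, d')); unfold vertex.
    - destruct (dot_eq_dec (a, d') (a, d')); congruence.
    - apply tri_dots_NoDup.
    - apply tri_dots_In; unfold in_tri; simpl; lia.
    - intros p Hp; destruct (dot_eq_dec p (a, d')); congruence. }
  rewrite !(black_count_within c _ _ a d') by (intros [u v]; unfold in_tri; simpl; lia).
  fold U; rewrite <- Hvertex, <- !wsum_add.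
  apply wsum_le; intros [u v] _; unfold vertex.
  destruct (dot_eq_dec (u, v) (a, d')) as [E|_];
    [injection E as Hu Hv|]; destruct (c (u, v)); unfold in_trib, b2z; simpl;
    destruct (Z.leb_spec a u), (Z.leb_spec b u), (Z.leb_spec v d'),
      (Z.leb_spec v g'), (Z.leb_spec 2 (v - u)); simpl; lia.
Qed.

Lemma sparse_no_crossing (c : colouring) (d e a g' b d' : Z) :
  sparse c d e -> in_tri d e (a, g') -> in_tri d e (b, d') ->
  c (a, g') = true -> c (b, d') = true -> a < b -> b < g' -> g' < d' -> False.
Proof.
  intros Hs H1 H2 Hblack1 Hblack2 Hab Hbg Hgd.
  unfold in_tri in H1, H2; simpl in H1, H2.
  assert (Hcount1 : black_count c a g' = g' - a - 1)
    by (apply (Hs a g'); [unfold in_tri; simpl; lia | exact Hblack1]).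
  assert (Hcount2 : black_count c b d' = d' - b - 1)
    by (apply (Hs b d'); [unfold in_tri; simpl; lia | exact Hblack2]).
  assert (Hoverlap := sparse_black_count_le c d e b g' Hs ltac:(lia) Hbg ltac:(lia)).
  assert (Hunion := crossing_count c a b g' d' Hab Hbg Hgd).
  destruct (Hs a d') as [Hle Heq]; [unfold in_tri; simpl; lia|].
  destruct (c (a, d')) eqn:Hcorner; simpl in Hunion.
  - lia.
  - discriminate (proj1 Heq ltac:(lia)).
Qed.

Theorem mainTheorem1 (c : colouring) (d e g a g' b d' : Z) :
  d < e ->
  sparse c d e ->
  in_tri d e (a, g') -> in_tri d e (b, d') ->
  c (a, g') = true -> c (b, d') = true ->
  (a, g') <> (b, d') ->
  a <= g <= g' -> b <= g <= d' ->
  (on_line g (a, g') /\ on_line g (b, d')) \/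
  preceq (a, g') (b, d') \/ preceq (b, d') (a, g').
Proof.
  intros _ Hs H1 H2 Hblack1 Hblack2 _ Hg1 Hg2.
  unfold preceq, on_line; simpl.
  (* Two non-comparable dots either interleave, which sparseness forbids, or
     are separated by g, so that each of them has g as a coordinate. *)
  destruct (Z_le_gt_dec b a), (Z_le_gt_dec g' d'); try (right; lia).
  - destruct (Z.eq_dec a b); [right; lia|].
    destruct (Z_le_gt_dec d' a); [left; lia|].
    exfalso; apply (sparse_no_crossing c d e b d' a g'); auto; lia.
  - destruct (Z.eq_dec g' d'); [right; lia|].
    destruct (Z_le_gt_dec g' b); [left; lia|].
    exfalso; apply (sparse_no_crossing c d e a g' b d'); auto; lia.
Qed.
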